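(* For every $\varepsilon>0$ and $K>0$ there exists a constant $C$ depending only on $\varepsilon$ and $K$ such that for any two real random variables $W_1,W_2$ with $\mathbb{E}(|W_1|^2+|W_2|^2)\le K$, $$\mathbb{E}\Big(\log\big(xe^{W_1}+e^{W_2}\big)\Big)^2\le(\log x)^2+2(\varepsilon+\mathbb{E}W_1)\log x+C$$ for every $x\ge1$. *)

From HB Require Import structures.
From mathcomp Require Import all_boot all_order all_algebra.
From mathcomp Require Import all_classical all_reals all_analysis.

From HB Require Import structures.
From mathcomp Require Import all_boot all_order all_algebra.
From mathcomp Require Import all_classical all_reals all_analysis.
From mathcomp Require Import ring lra measurable_realfun.
Import Order.TTheory GRing.Theory Num.Theory.
Local Open Scope ring_scope.

(* Put a := ln x >= 0 and s := W2 - W1. Then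
   ln (x e^W1 + e^W2) = a + W1 + g  with  g := ln (1 + e^(s - a)),
   so its square is a^2 + 2 a W1 plus a remainder 2 a g + (W1 + g)^2.
   Since g <= min (e^(s-a), 1 + |s|), the cross term a g is at most 1 + 3 s^2:
   for s <= a/2 one has g <= e^(-a/2) <= 1/a, and otherwise a < 2 s.
   The remainder is thus dominated by 6 + 22 (W1^2 + W2^2) uniformly in x, and
   taking expectations gives the claim with C := 6 + 22 K. *)

Section softplus.
Context {R : realType}.
Implicit Types a s t u v x : R.

Definition softplus t := ln (1 + expR t).

Lemma softplus_ge0 t : 0 <= softplus t.
Proof. by apply: ln_ge0; rewrite lerDl ltW ?expR_gt0. Qed.

Lemma softplus_le_expR t : softplus t <= expR t.
Proof. by apply: le_ln1Dx; have := expR_gt0 t; lra. Qed.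

Lemma softplus_le : {homo softplus : t u / t <= u}.
Proof.
move=> t u tu; rewrite /softplus ler_ln ?posrE ?ltr_wpDr ?expR_ge0 //.
by rewrite lerD2l ler_expR.
Qed.

Lemma softplus_le1Dnorm t : softplus t <= 1 + `|t|.
Proof.
rewrite -[leRHS]expRK /softplus ler_ln ?posrE ?expR_gt0 ?ltr_wpDr ?expR_ge0 //.
have e2 : 2 <= expR 1 :> R by have := expR_ge1Dx (1 : R); lra.
have et : expR t <= expR `|t| by rewrite ler_expR ler_norm.
have e1 : 1 <= expR `|t| by rewrite -expR0 ler_expR.
rewrite expRD; nra.
Qed.

Lemma ln_expRD u v : ln (expR u + expR v) = u + softplus (v - u).
Proof.
rewrite -[in expR v](subrKC u v) expRD -[X in X + _]mulr1 -mulrDr.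
by rewrite lnM ?posrE ?expR_gt0 ?ltr_wpDr ?expR_ge0 // expRK.
Qed.

Lemma ler_expR_half x : x <= expR (x / 2).
Proof.
have [x0|x0] := leP x 0; first by rewrite (le_trans x0) ?expR_ge0.
have -> : x / 2 = x / 4 + x / 4 by field.
have e4 := expR_ge1Dx (x / 4).
have := sqr_ge0 (1 - x / 4); rewrite expRD; nra.
Qed.

Lemma mul_softplus_le a s : 0 <= a -> a * softplus (s - a) <= 1 + 3 * s ^+ 2.
Proof.
move=> a0; have g0 := softplus_ge0 (s - a).
have [sa|sa] := leP s (a / 2).
  have ga := softplus_le_expR (s - a).
  have ea := ler_expR_half a.
  have e1 : expR (a / 2) * expR (s - a) <= 1 by rewrite -expRD expR_le1; lra.
  have k1 : 0 <= a * (expR (s - a) - softplus (s - a)) by apply: mulr_ge0; lra.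
  have k2 : 0 <= (expR (a / 2) - a) * expR (s - a).
    by apply: mulr_ge0; rewrite ?expR_ge0 //; lra.
  have := sqr_ge0 s; nra.
have g1 : softplus (s - a) <= 1 + s.
  rewrite -[s in 1 + s]ger0_norm; last lra.
  by apply: le_trans (softplus_le1Dnorm s); apply: softplus_le; lra.
have := sqr_ge0 (s - 1); nra.
Qed.

Lemma sqr_ln_mulexpRD_le x w1 w2 : 1 <= x ->
  ln (x * expR w1 + expR w2) ^+ 2 <=
  ln x ^+ 2 + 2 * ln x * w1 + 6 + 22 * (`|w1| ^+ 2 + `|w2| ^+ 2).
Proof.
move=> x1; have a0 : 0 <= ln x := ln_ge0 x1.
have xE : x = expR (ln x) by rewrite lnK // posrE; lra.
rewrite {1}xE -expRD ln_expRD.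
set a := ln x in a0 *; set s := w2 - w1.
have -> : w2 - (a + w1) = s - a by rewrite /s; ring.
have ag := mul_softplus_le a s a0.
have g0 := softplus_ge0 (s - a).
have g1 : softplus (s - a) <= 1 + `|s|.
  by apply: le_trans (softplus_le1Dnorm s); apply: softplus_le; lra.
have gg : softplus (s - a) ^+ 2 <= 2 + 2 * s ^+ 2.
  rewrite -(real_normK (num_real s)).
  have := sqr_ge0 (`|s| - 1); have := normr_ge0 s; nra.
rewrite !real_normK ?num_real //.
have := sqr_ge0 (w1 - softplus (s - a)); have := sqr_ge0 (w1 + w2).
rewrite /s in ag gg *; nra.
Qed.

End softplus.

Section expectation_le.
Context {d : measure_display} {T : measurableType d} {R : realType}
  {P : probability T R}.
Local Open Scope ereal_scope.

Lemma ge0_expectation_le (X Y : T -> R) :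
  measurable_fun setT X -> measurable_fun setT Y ->
  (forall w, 0 <= X w)%R -> (forall w, X w <= Y w)%R -> 'E_P[X] <= 'E_P[Y].
Proof.
move=> mX mY X0 XY; rewrite !unlock ge0_le_integral //.
- by move=> w _; rewrite lee_fin.
- exact/measurable_EFinP.
- exact/measurable_EFinP.
- by move=> w _; rewrite lee_fin.
Qed.

Lemma ge0_Lfun1 (X : T -> R) : measurable_fun setT X ->
  (forall w, 0 <= X w)%R -> 'E_P[X] < +oo -> X \in Lfun P 1.
Proof.
rewrite unlock => mX X0 EX; apply/Lfun1_integrable/integrableP.
split; first exact/measurable_EFinP.
by under eq_integral => w _ do rewrite /= ger0_norm ?X0 //.
Qed.

Lemma le_Lfun1 (X Y : T -> R) : measurable_fun setT X -> Y \in Lfun P 1 ->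
  (forall w, `|X w| <= Y w)%R -> X \in Lfun P 1.
Proof.
move=> mX /Lfun1_integrable iY XY; apply/Lfun1_integrable.
apply: le_integrable iY => //; first exact/measurable_EFinP.
by move=> w _; rewrite /= lee_fin (le_trans (XY w)) ?ler_norm.
Qed.

Lemma expectation_cstD_scaleD (c a b : R) (X Y : T -> R) :
  X \in Lfun P 1 -> Y \in Lfun P 1 ->
  'E_P[(cst c \+ (a \o* X \+ b \o* Y))%R] = c%:E + a%:E * 'E_P[X] + b%:E * 'E_P[Y].
Proof.
move=> LX LY; have LaX := Lfun_scale a (lexx _) LX.
have LbY := Lfun_scale b (lexx _) LY.
rewrite expectationD ?Lfun_cst ?rpredD // expectationD //.
by rewrite !expectationZl // expectation_cst addeA.
Qed.

End expectation_le.

Local Open Scope ereal_scope.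

Theorem lemma3 (R : realType) (eps K : R) (heps : (0 < eps)%R) (hK : (0 < K)%R) :
  exists C : R,
    forall (d : measure_display) (T : measurableType d) (P : probability T R)
           (W1 W2 : {RV P >-> R}),
      'E_P[fun w => (`|W1 w| ^+ 2 + `|W2 w| ^+ 2)%R] <= K%:E ->
      forall x : R, (1 <= x)%R ->
        'E_P[fun w => (ln (x * expR (W1 w) + expR (W2 w)) ^+ 2)%R]
          <= ((ln x) ^+ 2)%:E + 2%:E * (eps%:E + 'E_P[W1]) * (ln x)%:E + C%:E.
Proof.
exists (6 + 22 * K)%R => d T P W1 W2 EQ x x1.
set Q := (fun w => _) in EQ.
have mQ : measurable_fun setT Q.
  by apply: measurable_funD; apply: measurable_funX; apply: measurableT_comp.
have Q0 w : (0 <= Q w)%R by rewrite addr_ge0 ?sqr_ge0.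
have LQ : Q \in Lfun P 1 := ge0_Lfun1 Q mQ Q0 (le_lt_trans EQ (ltry K)).
have LW1 : (W1 : T -> R) \in Lfun P 1.
  apply: (le_Lfun1 _ _ _ (rpredD (Lfun_cst P 1%R 1%R) LQ)) => // w /=.
  rewrite /GRing.add /= /Q.
  by have := sqr_ge0 (`|W1 w| - 1)%R; have := sqr_ge0 `|W2 w|; nra.
pose B := (cst (ln x ^+ 2 + 6) \+ ((2 * ln x) \o* W1 \+ 22 \o* Q))%R.
apply: (@le_trans _ _ 'E_P[B]); first apply: ge0_expectation_le.
- apply: measurable_funX; apply: measurableT_comp; first exact: measurable_ln.
  apply: measurable_funD; last exact: measurableT_comp.
  by apply: measurable_funM => //; exact: measurableT_comp.
- by apply: measurable_funD => //; apply: measurable_funD; apply: measurable_funM.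
- by move=> w; rewrite sqr_ge0.
- move=> w /=; have := sqr_ln_mulexpRD_le x (W1 w) (W2 w) x1.
  by rewrite /B /Q /=; nra.
rewrite /B expectation_cstD_scaleD //.
have EQK : (fine 'E_P[Q] <= K)%R by rewrite -lee_fin fineK ?expectation_fin_num.
rewrite -(fineK (expectation_fin_num LW1)) -(fineK (expectation_fin_num LQ)).
rewrite -!EFinM -!EFinD lee_fin.
have := mulr_ge0 (ltW heps) (ln_ge0 x1); nra.
Qed.
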